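(* $$\sum_{n=1}^\infty \frac{H_n \binom{2n}{n}}{n(n+1)\, 2^{2n}} = \frac{\pi^2}{3} - 4\log 2.$$
   Context: $H_n=\sum_{k=1}^n \frac{1}{k}$ denotes the $n$-th harmonic number and $\binom{2n}{n}$ the central binomial coefficient; $\log$ is the natural logarithm. *)

From Stdlib Require Import Reals.
From Coquelicot Require Import Coquelicot.
Open Scope R_scope.

Definition harmonic (n : nat) : R :=
  sum_n_m (fun k => / INR k) 1 n.

Definition central_binom (n : nat) : R := Binomial.C (2 * n) n.

(* summand for n >= 1; the series index starts at n = 1 *)
Definition summand (n : nat) : R :=
  harmonic n * central_binom n / (INR n * (INR n + 1) * 2 ^ (2 * n)).

From Stdlib Require Import Reals Lra Lia.
From Coquelicot Require Import Coquelicot.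
Open Scope R_scope.

(* Write c_n = binom(2n, n) / 4^n and s = sin x.  On [0, PI/2] the partial sums P_N of
   sec x = sum_n c_n s^(2n) satisfy (cos x * P_N)' = -(2N+2) c_(N+1) s^(2N+1), so the defect
   1 - cos x * P_N is nonnegative with integral at most c_N -> 0.  Integrating this defect
   against 2 s^(2j+1), against PI/2 - x (through the partial sums of arcsin) and against
   1 / sin x gives
     sum_n c_n / (n + j + 1) = 1 / ((j + 1) c_(j+1)),
     sum_n 1 / (2n + 1)^2 = PI^2 / 8, hence zeta(2) = PI^2 / 6,
     sum_n c_(n+1) / (n + 1) = 2 log 2,
   and the Wallis reduction formula gives sum_n 1 / ((n + 1)^2 c_(n+1)) = PI^2 / 2.
   Since 1 / (n (n + 1)) = 1 / n - 1 / (n + 1), the series splits into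
   sum_n c_n H_n / n - sum_n c_n H_n / (n + 1).  Writing H_n / n = sum_k 1 / (k (k + n)) and
   c_n / (n + 1) = 2 (c_n - c_(n+1)) and exchanging the order of summation (all terms are
   nonnegative) turns these into PI^2 / 2 - PI^2 / 6 and 2 * 2 log 2. *)

(* Coquelicot states these equalities in the carrier of an abstract structure, where [ring]
   and [field] do not apply; these versions are stated in [R]. *)
Lemma sum_Sn_R (a : nat -> R) (n : nat) : sum_n a (S n) = sum_n a n + a (S n).
Proof. exact (sum_Sn a n). Qed.

Lemma sum_n_ext_loc_R (a b : nat -> R) (N : nat) :
  (forall n, (n <= N)%nat -> a n = b n) -> sum_n a N = sum_n b N.
Proof. apply sum_n_ext_loc. Qed.

Lemma sum_n_mult_l_R (c : R) (a : nat -> R) (N : nat) :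
  c * sum_n a N = sum_n (fun n => c * a n) N.
Proof. symmetry. apply (sum_n_mult_l (K := R_Ring)). Qed.

Lemma is_series_ext_R (a b : nat -> R) (l : R) :
  (forall n, a n = b n) -> is_series a l -> is_series b l.
Proof. apply is_series_ext. Qed.

Lemma is_RInt_ext_R (f g : R -> R) (a b v : R) :
  (forall x, f x = g x) -> is_RInt f a b v -> is_RInt g a b v.
Proof. intros Hfg. apply is_RInt_ext. intros x _. apply Hfg. Qed.

Lemma is_derive_ext_R (f g : R -> R) (x l : R) :
  (forall t, f t = g t) -> is_derive f x l -> is_derive g x l.
Proof. apply is_derive_ext. Qed.

Lemma is_derive_mult_R (f g : R -> R) (x df dg : R) :
  is_derive f x df -> is_derive g x dg -> is_derive (fun t => f t * g t) x (df * g x + f x * dg).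
Proof. intros Hf Hg. apply (is_derive_mult f g); [exact Hf | exact Hg | intros; apply Rmult_comm]. Qed.

(** * Partial sums and series of reals *)

Lemma sum_n_le_mono_nonneg (a : nat -> R) (N M : nat) :
  (forall n, 0 <= a n) -> (N <= M)%nat -> sum_n a N <= sum_n a M.
Proof.
  intros Ha HNM. induction HNM as [|M HNM IH]; [lra |].
  rewrite sum_Sn_R. specialize (Ha (S M)). lra.
Qed.

Lemma sum_n_le_series (a : nat -> R) (l : R) (N : nat) :
  (forall n, 0 <= a n) -> is_series a l -> sum_n a N <= l.
Proof.
  intros Ha Hl. apply (is_lim_seq_incr_compare (sum_n a)); [exact Hl |].
  intros n. rewrite sum_Sn_R. specialize (Ha (S n)). lra.
Qed.

Lemma is_series_le (a b : nat -> R) (la lb : R) :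
  (forall n, a n <= b n) -> is_series a la -> is_series b lb -> la <= lb.
Proof.
  intros Hab Ha Hb.
  apply (is_lim_seq_le (sum_n a) (sum_n b) la lb); [intros; now apply sum_n_m_le | exact Ha | exact Hb].
Qed.

Lemma is_series_shift_R (a : nat -> R) (l : R) : is_series a l -> is_series (fun n => a (S n)) (l - a O).
Proof.
  intros Ha. apply (is_series_incr_1 (K := R_AbsRing) (V := R_NormedModule)).
  change (plus (l - a O) (a O)) with (l - a O + a O). now replace (l - a O + a O) with l by ring.
Qed.

Lemma is_series_finite (a : nat -> R) (N : nat) :
  (forall n, (N < n)%nat -> a n = 0) -> is_series a (sum_n a N).
Proof.
  intros Ha. change (is_lim_seq (sum_n a) (sum_n a N)).
  apply (is_lim_seq_ext_loc (fun _ => sum_n a N)); [| apply is_lim_seq_const].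
  exists N. intros n Hn. induction Hn as [|n Hn IH]; [reflexivity |].
  rewrite sum_Sn_R, Ha by lia. lra.
Qed.

Lemma is_series_telescope (u : nat -> R) (l : R) :
  is_lim_seq u l -> is_series (fun n => u n - u (S n)) (u O - l).
Proof.
  intros Hu.
  assert (Hpart : forall N, sum_n (fun n => u n - u (S n)) N = u O - u (S N) :> R).
  { induction N as [|N IH]; [rewrite sum_O; reflexivity | rewrite sum_Sn_R, IH; ring]. }
  change (is_lim_seq (sum_n (fun n => u n - u (S n))) (u O - l)).
  apply (is_lim_seq_ext (fun N => u O - u (S N))); [intros; now rewrite Hpart |].
  apply is_lim_seq_minus'; [apply is_lim_seq_const | now apply is_lim_seq_incr_1 in Hu].
Qed.

Lemma is_series_of_remainder (a : nat -> R) (l : R) (e : nat -> R) :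
  (forall N, 0 <= l - sum_n a N <= e N) -> is_lim_seq e 0 -> is_series a l.
Proof.
  intros Hae He. change (is_lim_seq (sum_n a) l).
  apply (is_lim_seq_ext (fun N => l - (l - sum_n a N))); [intros; ring |].
  replace (Finite l) with (Rbar_minus l 0) by (simpl; f_equal; ring).
  apply is_lim_seq_minus'; [apply is_lim_seq_const |].
  apply (is_lim_seq_le_le (fun _ => 0) _ e); [exact Hae | apply is_lim_seq_const | exact He].
Qed.

Lemma is_lim_seq_0_of_sqr_le (u v : nat -> R) :
  (forall n, 0 <= u n) -> (forall n, u n ^ 2 <= v n) -> is_lim_seq v 0 -> is_lim_seq u 0.
Proof.
  intros Hu Huv Hv.
  apply (is_lim_seq_le_le (fun _ => 0) u (fun n => sqrt (v n))); [| apply is_lim_seq_const |].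
  - intros n. split; [apply Hu |]. rewrite <- (sqrt_pow2 (u n)) by apply Hu.
    apply sqrt_le_1_alt, Huv.
  - rewrite <- sqrt_0. apply is_lim_seq_continuous; [apply continuity_pt_sqrt; lra | exact Hv].
Qed.

Lemma is_lim_seq_inv_affine (a b : R) :
  0 < a -> 0 < b -> is_lim_seq (fun n => / (a * INR n + b)) 0.
Proof.
  intros Ha Hb.
  replace (Finite 0) with (Rbar_inv p_infty) by reflexivity.
  apply is_lim_seq_inv; [| discriminate].
  eapply is_lim_seq_plus; [apply is_lim_seq_scal_l, is_lim_seq_INR | apply is_lim_seq_const |].
  simpl. destruct (Rle_dec 0 a) as [Ha0 | Ha0]; [destruct (Rle_lt_or_eq_dec 0 a Ha0) |];
    simpl; try reflexivity; lra.
Qed.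

Lemma is_series_sum_n (a : nat -> nat -> R) (r : nat -> R) (N : nat) :
  (forall n, is_series (a n) (r n)) ->
  is_series (fun k => sum_n (fun n => a n k) N) (sum_n r N).
Proof.
  intros Ha. induction N as [|N IH].
  - rewrite sum_O. apply (is_series_ext (a O)); [intros; now rewrite sum_O | apply Ha].
  - rewrite sum_Sn_R.
    apply (is_series_ext (fun k => sum_n (fun n => a n k) N + a (S N) k)).
    + intros; now rewrite sum_Sn_R.
    + now apply (is_series_plus (K := R_AbsRing) (V := R_NormedModule)).
Qed.

Lemma sum_n_swap_le_series (a : nat -> nat -> R) (r s : nat -> R) (L : R) (N : nat) :
  (forall n k, 0 <= a n k) -> (forall n, is_series (a n) (r n)) ->
  (forall k, is_series (fun n => a n k) (s k)) -> is_series s L -> sum_n r N <= L.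
Proof.
  intros Ha Hr Hs HL.
  apply (is_series_le (fun k => sum_n (fun n => a n k) N) s); [| now apply is_series_sum_n | exact HL].
  intros k. apply (sum_n_le_series (fun n => a n k)); [intros; apply Ha | apply Hs].
Qed.

Lemma is_series_swap_nonneg (a : nat -> nat -> R) (r s : nat -> R) (L : R) :
  (forall n k, 0 <= a n k) -> (forall n, is_series (a n) (r n)) ->
  (forall k, is_series (fun n => a n k) (s k)) -> is_series s L -> is_series r L.
Proof.
  intros Ha Hr Hs HL.
  assert (Hr0 : forall n, 0 <= r n).
  { intros n. apply (Rle_trans _ (sum_n (a n) 0)).
    - rewrite sum_O. apply Ha.
    - apply sum_n_le_series; [apply Ha | apply Hr]. }
  destruct (ex_finite_lim_seq_incr (sum_n r) L) as [R0 HR0].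
  { intros n. rewrite sum_Sn_R. specialize (Hr0 (S n)). lra. }
  { intros N. now apply (sum_n_swap_le_series a r s). }
  assert (HR0L : Rbar_le R0 L).
  { apply (is_lim_seq_le (sum_n r) (fun _ => L)); [| exact HR0 | apply is_lim_seq_const].
    intros N. now apply (sum_n_swap_le_series a r s). }
  assert (HLR0 : Rbar_le L R0).
  { apply (is_lim_seq_le (sum_n s) (fun _ => R0)); [| exact HL | apply is_lim_seq_const].
    intros K. now apply (sum_n_swap_le_series (fun k n => a n k) s r). }
  simpl in HR0L, HLR0. replace L with R0 by lra. exact HR0.
Qed.

(** * Derivatives and integrals *)

Lemma continuous_of_is_derive (f : R -> R) (x l : R) : is_derive f x l -> continuous f x.
Proof.
  intros Hd. apply (ex_derive_continuous (K := R_AbsRing) (V := R_NormedModule)). now exists l.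
Qed.

Ltac continuous_by_derive :=
  apply (ex_derive_continuous (K := R_AbsRing) (V := R_NormedModule)); auto_derive; try exact I.

Lemma le_of_derive_nonneg (f df : R -> R) (a b : R) : a <= b ->
  (forall x, a <= x <= b -> is_derive f x (df x)) ->
  (forall x, a <= x <= b -> 0 <= df x) -> f a <= f b.
Proof.
  intros Hab Hd Hdf.
  destruct (MVT_gen f a b df) as (c & Hc & Hmvt); rewrite ?Rmin_left, ?Rmax_right in * by lra.
  - intros x Hx. apply Hd. lra.
  - intros x Hx. apply continuity_pt_filterlim, (continuous_of_is_derive _ _ (df x)), Hd, Hx.
  - specialize (Hdf c Hc). nra.
Qed.

Lemma is_RInt_derive_le (f df : R -> R) (a b : R) : a <= b ->
  (forall x, a <= x <= b -> is_derive f x (df x)) ->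
  (forall x, a <= x <= b -> continuous df x) -> is_RInt df a b (f b - f a).
Proof.
  intros Hab Hd Hc. apply (is_RInt_derive f df); rewrite Rmin_left, Rmax_right by lra; assumption.
Qed.

Lemma is_RInt_sum_n (f : nat -> R -> R) (v : nat -> R) (a b : R) (N : nat) :
  (forall n, is_RInt (f n) a b (v n)) ->
  is_RInt (fun x => sum_n (fun n => f n x) N) a b (sum_n v N).
Proof.
  intros Hf. induction N as [|N IH].
  - rewrite sum_O. apply (is_RInt_ext (f O)); [intros; now rewrite sum_O | apply Hf].
  - rewrite sum_Sn_R. apply (is_RInt_ext (fun x => sum_n (fun n => f n x) N + f (S N) x)).
    + intros; now rewrite sum_Sn_R.
    + now apply (is_RInt_plus (V := R_NormedModule)).
Qed.

Lemma is_RInt_by_parts_weight (F f : R -> R) (a b v : R) : a <= b -> F a = 0 ->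
  (forall x, a <= x <= b -> is_derive F x (f x)) ->
  (forall x, a <= x <= b -> continuous f x) ->
  is_RInt (fun x => (b - x) * f x) a b v -> is_RInt F a b v.
Proof.
  intros Hab HFa Hd Hc Hv.
  assert (Hparts : is_RInt (fun x => F x + (x - b) * f x) a b 0).
  { replace 0 with ((b - b) * F b - (a - b) * F a) by (rewrite HFa; ring).
    apply (is_RInt_derive_le (fun x => (x - b) * F x)); [exact Hab | |].
    - intros x Hx. replace (F x + (x - b) * f x) with (1 * F x + (x - b) * f x) by ring.
      apply (is_derive_mult_R (fun t => t - b) F); [auto_derive; [exact I | ring] | now apply Hd].
    - intros x Hx. apply (continuous_plus (V := R_NormedModule) F).
      + eapply continuous_of_is_derive, Hd, Hx.
      + apply (continuous_mult (K := R_AbsRing) (fun x => x - b) f); [| now apply Hc].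
        apply (continuous_of_is_derive _ _ 1). auto_derive; [exact I | ring]. }
  apply (is_RInt_ext_R (fun x => (F x + (x - b) * f x) + (b - x) * f x)); [intros x; ring |].
  replace v with (0 + v) by ring. now apply (is_RInt_plus (V := R_NormedModule)).
Qed.

(** * Central binomial coefficients *)

(* [cbinom n] is [binom(2n, n) / 4^n], defined by its recurrence. *)
Fixpoint cbinom (n : nat) : R :=
  match n with
  | O => 1
  | S m => cbinom m * (2 * INR m + 1) / (2 * INR m + 2)
  end.

Lemma cbinom_pos (n : nat) : 0 < cbinom n.
Proof.
  induction n as [|n IH]; simpl; [lra |]. pose proof (pos_INR n).
  apply Rdiv_lt_0_compat; [apply Rmult_lt_0_compat |]; lra.
Qed.

Lemma cbinom_S (n : nat) : (2 * INR n + 2) * cbinom (S n) = (2 * INR n + 1) * cbinom n.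
Proof. simpl. pose proof (pos_INR n). field. lra. Qed.

Lemma cbinom_S_le (n : nat) : cbinom (S n) <= cbinom n.
Proof. pose proof (cbinom_S n). pose proof (cbinom_pos n). pose proof (pos_INR n). nra. Qed.

Lemma cbinom_sqr_le (n : nat) : (2 * INR n + 1) * cbinom n ^ 2 <= 1.
Proof.
  induction n as [|n IH]; [simpl; lra |]. rewrite S_INR.
  pose proof (cbinom_S n) as E. pose proof (pos_INR n) as Hn.
  assert (Hsq : ((2 * INR n + 2) * cbinom (S n)) ^ 2 = ((2 * INR n + 1) * cbinom n) ^ 2) by now rewrite E.
  apply (Rmult_le_reg_l ((2 * INR n + 2) ^ 2)); [nra |].
  replace ((2 * INR n + 2) ^ 2 * ((2 * (INR n + 1) + 1) * cbinom (S n) ^ 2))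
    with ((2 * INR n + 3) * ((2 * INR n + 2) * cbinom (S n)) ^ 2) by ring.
  rewrite Hsq. nra.
Qed.

Lemma cbinom_sqr_ge (n : nat) : 1 <= 4 * (INR n + 1) * cbinom (S n) ^ 2.
Proof.
  induction n as [|n IH]; [simpl; lra |]. rewrite S_INR.
  pose proof (cbinom_S (S n)) as E. rewrite S_INR in E. pose proof (pos_INR n) as Hn.
  assert (Hsq : ((2 * INR n + 4) * cbinom (S (S n))) ^ 2 = ((2 * INR n + 3) * cbinom (S n)) ^ 2).
  { replace (2 * INR n + 4) with (2 * (INR n + 1) + 2) by ring.
    replace (2 * INR n + 3) with (2 * (INR n + 1) + 1) by ring. now rewrite E. }
  apply (Rmult_le_reg_l ((2 * INR n + 4) ^ 2 * (INR n + 1))); [nra |].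
  replace ((2 * INR n + 4) ^ 2 * (INR n + 1) * (4 * (INR n + 1 + 1) * cbinom (S (S n)) ^ 2))
    with (4 * (INR n + 1) * (INR n + 2) * ((2 * INR n + 4) * cbinom (S (S n))) ^ 2) by ring.
  rewrite Hsq.
  replace (4 * (INR n + 1) * (INR n + 2) * ((2 * INR n + 3) * cbinom (S n)) ^ 2)
    with ((INR n + 2) * (2 * INR n + 3) ^ 2 * (4 * (INR n + 1) * cbinom (S n) ^ 2)) by ring.
  apply (Rle_trans _ ((INR n + 2) * (2 * INR n + 3) ^ 2 * 1)); [nra |].
  apply Rmult_le_compat_l; [nra | exact IH].
Qed.

Lemma is_lim_seq_cbinom : is_lim_seq cbinom 0.
Proof.
  apply (is_lim_seq_0_of_sqr_le _ (fun n => / (2 * INR n + 1))).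
  - intros n. apply Rlt_le, cbinom_pos.
  - intros n. pose proof (cbinom_sqr_le n) as Hc. pose proof (pos_INR n).
    apply (Rmult_le_reg_l (2 * INR n + 1)); [lra |]. rewrite Rinv_r by lra. exact Hc.
  - apply is_lim_seq_inv_affine; lra.
Qed.

Lemma is_lim_seq_inv_cbinom : is_lim_seq (fun n => / ((2 * INR n + 2) * cbinom (S n))) 0.
Proof.
  apply (is_lim_seq_0_of_sqr_le _ (fun n => / (1 * INR n + 1))).
  - intros n. pose proof (cbinom_pos (S n)). pose proof (pos_INR n).
    apply Rlt_le, Rinv_0_lt_compat, Rmult_lt_0_compat; lra.
  - intros n. pose proof (cbinom_sqr_ge n). pose proof (cbinom_pos (S n)). pose proof (pos_INR n).
    rewrite pow_inv, Rmult_1_l. apply Rinv_le_contravar; [lra |].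
    replace (((2 * INR n + 2) * cbinom (S n)) ^ 2)
      with ((INR n + 1) * (4 * (INR n + 1) * cbinom (S n) ^ 2)) by ring.
    nra.
  - apply is_lim_seq_inv_affine; lra.
Qed.

Lemma central_binom_cbinom (n : nat) : central_binom n = cbinom n * 2 ^ (2 * n).
Proof.
  unfold central_binom, Binomial.C. induction n as [|n IH]; [simpl; field |].
  replace (2 * S n - S n)%nat with (S n) by lia. replace (2 * n - n)%nat with n in IH by lia.
  replace (2 * S n)%nat with (S (S (2 * n))) by lia.
  rewrite !fact_simpl, !mult_INR.
  pose proof (INR_fact_lt_0 n). pose proof (INR_fact_lt_0 (2 * n)). pose proof (pos_INR n).
  replace (INR (Factorial.fact (2 * n)))
    with (cbinom n * 2 ^ (2 * n) * (INR (Factorial.fact n) * INR (Factorial.fact n)))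
    by (rewrite <- IH; field; lra).
  simpl cbinom. simpl pow. rewrite !S_INR, mult_INR. simpl INR. field. lra.
Qed.

(** * Integrals of powers of sine on [0, PI/2] *)

Lemma PI2_ge_0 : 0 <= PI / 2.
Proof. apply Rlt_le, PI2_RGT_0. Qed.

Lemma sin_cos_bounds (x : R) : 0 <= x <= PI / 2 -> 0 <= sin x <= 1 /\ 0 <= cos x.
Proof.
  intros Hx. pose proof PI_RGT_0. repeat split.
  - apply sin_ge_0; lra.
  - apply SIN_bound.
  - apply cos_ge_0; lra.
Qed.

Lemma sin_pow_bounds (k : nat) (x : R) : 0 <= x <= PI / 2 -> 0 <= sin x ^ k <= 1.
Proof.
  intros Hx. destruct (sin_cos_bounds x Hx) as [Hs _]. split; [now apply pow_le |].
  rewrite <- (pow1 k). now apply pow_incr.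
Qed.

Lemma is_derive_sin_pow (k : nat) (x : R) :
  is_derive (fun x => sin x ^ S k) x (INR (S k) * cos x * sin x ^ k).
Proof.
  replace (INR (S k) * cos x * sin x ^ k) with (INR (S k) * cos x * sin x ^ pred (S k)) by reflexivity.
  apply is_derive_pow, is_derive_sin.
Qed.

Lemma is_derive_cos_sin_pow (k : nat) (x : R) :
  is_derive (fun x => cos x * sin x ^ S k) x
    (INR (S k) * sin x ^ k - INR (S (S k)) * sin x ^ S (S k)).
Proof.
  replace (INR (S k) * sin x ^ k - INR (S (S k)) * sin x ^ S (S k))
    with (- sin x * sin x ^ S k + cos x * (INR (S k) * cos x * sin x ^ k)).
  - apply is_derive_mult_R; [apply is_derive_cos | apply is_derive_sin_pow].
  - assert (E : cos x * cos x = 1 - sin x * sin x) by (pose proof (sin2_cos2 x); unfold Rsqr in *; lra).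
    replace (cos x * (INR (S k) * cos x * sin x ^ k)) with (INR (S k) * (cos x * cos x) * sin x ^ k) by ring.
    rewrite E, !S_INR. simpl. ring.
Qed.

Lemma is_RInt_cos_sin_pow (m : nat) :
  is_RInt (fun x => cos x * sin x ^ m) 0 (PI / 2) (/ INR (S m)).
Proof.
  assert (HS : INR (S m) <> 0) by (apply not_0_INR; lia).
  replace (/ INR (S m)) with (/ INR (S m) * sin (PI / 2) ^ S m - / INR (S m) * sin 0 ^ S m)
    by (rewrite sin_PI2, sin_0, pow1, pow_i by lia; ring).
  apply (is_RInt_derive_le (fun x => / INR (S m) * sin x ^ S m)); [apply PI2_ge_0 | |].
  - intros x _. replace (cos x * sin x ^ m) with (/ INR (S m) * (INR (S m) * cos x * sin x ^ m))
      by (field; exact HS).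
    apply is_derive_scal, is_derive_sin_pow.
  - intros x _. continuous_by_derive.
Qed.

Lemma is_RInt_id_0_PI2 : is_RInt (fun x => x) 0 (PI / 2) (PI ^ 2 / 8).
Proof.
  replace (PI ^ 2 / 8) with ((PI / 2) ^ 2 / 2 - 0 ^ 2 / 2) by field.
  apply (is_RInt_derive_le (fun x => x ^ 2 / 2));
    [apply PI2_ge_0 | intros x _; auto_derive; [exact I | field] |].
  intros x _. continuous_by_derive.
Qed.

Lemma sin_weight_le_cos (x : R) : 0 <= x <= PI / 2 -> (PI / 2 - x) * sin x <= cos x.
Proof.
  intros Hx.
  assert (H : sin 0 - 0 * cos 0 <= sin (PI / 2 - x) - (PI / 2 - x) * cos (PI / 2 - x)).
  { apply (le_of_derive_nonneg (fun p => sin p - p * cos p) (fun p => p * sin p)); [lra | |].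
    - intros p _. replace (p * sin p) with (cos p - (1 * cos p + p * - sin p)) by ring.
      apply (is_derive_minus (V := R_NormedModule)); [apply is_derive_sin |].
      apply (is_derive_mult_R (fun p => p)); [apply (is_derive_id (K := R_AbsRing)) | apply is_derive_cos].
    - intros p Hp. apply Rmult_le_pos; [lra | apply sin_cos_bounds; lra]. }
  rewrite sin_0, sin_shift, cos_shift in H. lra.
Qed.

Definition weighted_sin_pow (k : nat) : R := RInt (fun x => (PI / 2 - x) * sin x ^ k) 0 (PI / 2).

Lemma is_RInt_weighted_sin_pow (k : nat) :
  is_RInt (fun x => (PI / 2 - x) * sin x ^ k) 0 (PI / 2) (weighted_sin_pow k).
Proof.
  apply (RInt_correct (V := R_CompleteNormedModule)), (ex_RInt_continuous (V := R_CompleteNormedModule)).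
  intros x _. continuous_by_derive.
Qed.

Lemma weighted_sin_pow_nonneg (k : nat) : 0 <= weighted_sin_pow k.
Proof.
  apply (is_RInt_ge_0 (fun x => (PI / 2 - x) * sin x ^ k) 0 (PI / 2));
    [apply PI2_ge_0 | apply is_RInt_weighted_sin_pow |].
  intros x Hx. apply Rmult_le_pos; [lra | apply pow_le, sin_cos_bounds; lra].
Qed.

Lemma weighted_sin_pow_le (k : nat) : weighted_sin_pow (S k) <= / INR (S k).
Proof.
  apply (is_RInt_le (fun x => (PI / 2 - x) * sin x ^ S k) (fun x => cos x * sin x ^ k) 0 (PI / 2));
    [apply PI2_ge_0 | apply is_RInt_weighted_sin_pow | apply is_RInt_cos_sin_pow |].
  intros x Hx. replace ((PI / 2 - x) * sin x ^ S k) with ((PI / 2 - x) * sin x * sin x ^ k) by (simpl; ring).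
  apply Rmult_le_compat_r; [apply pow_le, sin_cos_bounds; lra | apply sin_weight_le_cos; lra].
Qed.

Lemma weighted_sin_pow_odd_le (N : nat) : (2 * INR N + 1) * weighted_sin_pow (2 * N + 1) <= 1.
Proof.
  pose proof (weighted_sin_pow_le (2 * N)) as H. pose proof (pos_INR N).
  replace (S (2 * N)) with (2 * N + 1)%nat in H by lia.
  replace (INR (2 * N + 1)) with (2 * INR N + 1) in H by (rewrite plus_INR, mult_INR; simpl; ring).
  apply (Rmult_le_compat_l (2 * INR N + 1)) in H; [| lra]. rewrite Rinv_r in H by lra. exact H.
Qed.

Lemma weighted_sin_pow_even_le (N : nat) : (2 * INR N + 2) * weighted_sin_pow (2 * N + 2) <= 1.
Proof.
  pose proof (weighted_sin_pow_le (2 * N + 1)) as H. pose proof (pos_INR N).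
  replace (S (2 * N + 1)) with (2 * N + 2)%nat in H by lia.
  replace (INR (2 * N + 2)) with (2 * INR N + 2) in H by (rewrite plus_INR, mult_INR; simpl; ring).
  apply (Rmult_le_compat_l (2 * INR N + 2)) in H; [| lra]. rewrite Rinv_r in H by lra. exact H.
Qed.

(** * The secant series *)

(* Partial sums of [sec x = sum_n cbinom n * sin x ^ (2 n)], valid for [|x| < PI/2]. *)
Definition sec_partial (N : nat) (x : R) : R := sum_n (fun n => cbinom n * sin x ^ (2 * n)) N.

Definition sec_remainder (N : nat) (x : R) : R := 1 - cos x * sec_partial N x.

Lemma is_derive_cos_sec_partial (N : nat) (x : R) :
  is_derive (fun x => cos x * sec_partial N x) x
    (- ((2 * INR N + 2) * cbinom (S N) * sin x ^ (2 * N + 1))).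
Proof.
  induction N as [|N IH].
  - apply (is_derive_ext_R cos); [intros t; unfold sec_partial; rewrite sum_O; simpl; ring |].
    replace (- ((2 * INR 0 + 2) * cbinom 1 * sin x ^ (2 * 0 + 1))) with (- sin x) by (simpl; field).
    apply is_derive_cos.
  - apply (is_derive_ext_R
             (fun x => cos x * sec_partial N x + cbinom (S N) * (cos x * sin x ^ S (2 * N + 1)))).
    { intros t. unfold sec_partial. rewrite sum_Sn_R.
      replace (2 * S N)%nat with (S (2 * N + 1)) by lia. ring. }
    replace (- ((2 * INR (S N) + 2) * cbinom (S (S N)) * sin x ^ (2 * S N + 1)))
      with (- ((2 * INR N + 2) * cbinom (S N) * sin x ^ (2 * N + 1))
            + cbinom (S N) * (INR (S (2 * N + 1)) * sin x ^ (2 * N + 1)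
                              - INR (S (S (2 * N + 1))) * sin x ^ S (S (2 * N + 1)))).
    + apply (is_derive_plus (V := R_NormedModule)); [exact IH |].
      apply is_derive_scal, is_derive_cos_sin_pow.
    + pose proof (cbinom_S (S N)) as E. rewrite S_INR in E |- *.
      replace (2 * S N + 1)%nat with (S (S (2 * N + 1))) by lia.
      rewrite !S_INR, plus_INR, mult_INR. simpl INR.
      replace (2 * (INR N + 1) + 2) with (2 * INR N + 4) in * by ring.
      rewrite E. ring.
Qed.

Lemma is_derive_sec_remainder (N : nat) (x : R) :
  is_derive (sec_remainder N) x ((2 * INR N + 2) * cbinom (S N) * sin x ^ (2 * N + 1)).
Proof.
  unfold sec_remainder.
  replace ((2 * INR N + 2) * cbinom (S N) * sin x ^ (2 * N + 1))
    with (0 - - ((2 * INR N + 2) * cbinom (S N) * sin x ^ (2 * N + 1))) by ring.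
  apply (is_derive_minus (V := R_NormedModule)); [auto_derive; auto | apply is_derive_cos_sec_partial].
Qed.

Lemma sec_partial_0 (N : nat) : sec_partial N 0 = 1.
Proof.
  unfold sec_partial. induction N as [|N IH].
  - rewrite sum_O. simpl. ring.
  - rewrite sum_Sn_R, IH, sin_0, pow_i by lia. ring.
Qed.

Lemma sec_remainder_0 (N : nat) : sec_remainder N 0 = 0.
Proof. unfold sec_remainder. rewrite sec_partial_0, cos_0. ring. Qed.

Lemma sec_remainder_nonneg (N : nat) (x : R) : 0 <= x <= PI / 2 -> 0 <= sec_remainder N x.
Proof.
  intros Hx. rewrite <- (sec_remainder_0 N).
  apply (le_of_derive_nonneg (sec_remainder N)
           (fun t => (2 * INR N + 2) * cbinom (S N) * sin t ^ (2 * N + 1)) 0 x);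
    [lra | intros; apply is_derive_sec_remainder |].
  intros t Ht. pose proof (cbinom_pos (S N)). pose proof (pos_INR N).
  apply Rmult_le_pos; [nra | apply pow_le, sin_cos_bounds; lra].
Qed.

Lemma continuous_sec_remainder (N : nat) (x : R) : continuous (sec_remainder N) x.
Proof. eapply continuous_of_is_derive, is_derive_sec_remainder. Qed.

Lemma is_RInt_sin_pow_odd (N : nat) :
  is_RInt (fun x => sin x ^ (2 * N + 1)) 0 (PI / 2) (/ ((2 * INR N + 2) * cbinom (S N))).
Proof.
  set (K := (2 * INR N + 2) * cbinom (S N)).
  assert (HK : 0 < K) by (pose proof (cbinom_pos (S N)); pose proof (pos_INR N); unfold K; nra).
  assert (H : is_RInt (fun x => K * sin x ^ (2 * N + 1)) 0 (PI / 2) 1).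
  { replace 1 with (sec_remainder N (PI / 2) - sec_remainder N 0)
      by (rewrite sec_remainder_0; unfold sec_remainder; rewrite cos_PI2; ring).
    apply is_RInt_derive_le; [apply PI2_ge_0 | intros; apply is_derive_sec_remainder |].
    intros x _. continuous_by_derive. }
  replace (/ K) with (/ K * 1) by ring.
  apply (is_RInt_ext_R (fun x => / K * (K * sin x ^ (2 * N + 1)))); [intros x; field; lra |].
  now apply (is_RInt_scal (V := R_NormedModule)).
Qed.

Lemma is_RInt_sec_remainder (N : nat) :
  is_RInt (sec_remainder N) 0 (PI / 2) ((2 * INR N + 2) * cbinom (S N) * weighted_sin_pow (2 * N + 1)).
Proof.
  apply (is_RInt_by_parts_weight _ (fun x => (2 * INR N + 2) * cbinom (S N) * sin x ^ (2 * N + 1)));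
    [apply PI2_ge_0 | apply sec_remainder_0 | intros; apply is_derive_sec_remainder | |].
  - intros x _. continuous_by_derive.
  - apply (is_RInt_ext_R (fun x => (2 * INR N + 2) * cbinom (S N) * ((PI / 2 - x) * sin x ^ (2 * N + 1))));
      [intros x; ring |].
    apply (is_RInt_scal (V := R_NormedModule)), is_RInt_weighted_sin_pow.
Qed.

Lemma sec_remainder_integral_le (N : nat) :
  (2 * INR N + 2) * cbinom (S N) * weighted_sin_pow (2 * N + 1) <= cbinom N.
Proof.
  rewrite cbinom_S. pose proof (weighted_sin_pow_odd_le N). pose proof (cbinom_pos N).
  pose proof (weighted_sin_pow_nonneg (2 * N + 1)). nra.
Qed.

Lemma is_series_cbinom_div_add (j : nat) :
  is_series (fun n => cbinom n / (INR n + INR j + 1)) (/ ((INR j + 1) * cbinom (S j))).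
Proof.
  pose proof (pos_INR j). pose proof (cbinom_pos (S j)).
  apply (is_series_of_remainder _ _ (fun N => 2 * cbinom N)).
  2: { replace (Finite 0) with (Rbar_mult 2 0) by (simpl; f_equal; ring).
       apply is_lim_seq_scal_l, is_lim_seq_cbinom. }
  intros N.
  assert (Hint : is_RInt (fun x => 2 * sin x ^ (2 * j + 1) * sec_remainder N x) 0 (PI / 2)
                   (/ ((INR j + 1) * cbinom (S j)) - sum_n (fun n => cbinom n / (INR n + INR j + 1)) N)).
  { apply (is_RInt_ext_R (fun x => 2 * sin x ^ (2 * j + 1)
             - sum_n (fun n => cbinom n * (2 * (cos x * sin x ^ (2 * n + 2 * j + 1)))) N)).
    { intros x. unfold sec_remainder, sec_partial.
      transitivity (2 * sin x ^ (2 * j + 1) - 2 * sin x ^ (2 * j + 1) * cos x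
                      * sum_n (fun n => cbinom n * sin x ^ (2 * n)) N); [| ring].
      rewrite sum_n_mult_l_R. f_equal. apply sum_n_ext_loc_R. intros n _.
      replace (2 * n + 2 * j + 1)%nat with (2 * n + (2 * j + 1))%nat by lia. rewrite pow_add. ring. }
    apply (is_RInt_minus (V := R_NormedModule)).
    - replace (/ ((INR j + 1) * cbinom (S j))) with (2 * / ((2 * INR j + 2) * cbinom (S j))) by (field; lra).
      apply (is_RInt_scal (V := R_NormedModule)), is_RInt_sin_pow_odd.
    - apply is_RInt_sum_n. intros n.
      replace (cbinom n / (INR n + INR j + 1)) with (cbinom n * (2 * / INR (S (2 * n + 2 * j + 1)))).
      + apply (is_RInt_scal (V := R_NormedModule)), (is_RInt_scal (V := R_NormedModule)), is_RInt_cos_sin_pow.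
      + rewrite S_INR, !plus_INR, !mult_INR. simpl. pose proof (pos_INR n). field. lra. }
  split.
  - apply (is_RInt_ge_0 _ 0 (PI / 2) _ PI2_ge_0 Hint). intros x Hx.
    pose proof (sec_remainder_nonneg N x). pose proof (sin_pow_bounds (2 * j + 1) x).
    apply Rmult_le_pos; [apply Rmult_le_pos |]; lra.
  - apply (Rle_trans _ (2 * ((2 * INR N + 2) * cbinom (S N) * weighted_sin_pow (2 * N + 1)))).
    + apply (is_RInt_le _ (fun x => 2 * sec_remainder N x) 0 (PI / 2) _ _ PI2_ge_0 Hint).
      * apply (is_RInt_scal (V := R_NormedModule)), is_RInt_sec_remainder.
      * intros x Hx. pose proof (sec_remainder_nonneg N x). pose proof (sin_pow_bounds (2 * j + 1) x). nra.
    + pose proof (sec_remainder_integral_le N). lra.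
Qed.

(** * Series with value PI^2 *)

(* The primitive of [sin ^ (2 N + 2) / cbinom (N + 1)] vanishing at 0, given by the Wallis
   reduction formula. *)
Definition wallis_primitive (N : nat) (x : R) : R :=
  x - sum_n (fun n => cos x * sin x ^ (2 * n + 1) / ((2 * INR n + 2) * cbinom (S n))) N.

Lemma is_derive_wallis_primitive (N : nat) (x : R) :
  is_derive (wallis_primitive N) x (sin x ^ (2 * N + 2) / cbinom (S N)).
Proof.
  unfold wallis_primitive.
  replace (sin x ^ (2 * N + 2) / cbinom (S N)) with (1 - (1 - sin x ^ (2 * N + 2) / cbinom (S N))) by ring.
  apply (is_derive_minus (V := R_NormedModule)); [apply (is_derive_id (K := R_AbsRing)) |].
  induction N as [|N IH].
  - apply (is_derive_ext_R (fun x => / (2 * cbinom 1) * (cos x * sin x ^ S 0))).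
    { intros t. rewrite sum_O. simpl. field. }
    replace (1 - sin x ^ (2 * 0 + 2) / cbinom 1)
      with (/ (2 * cbinom 1) * (INR 1 * sin x ^ 0 - INR 2 * sin x ^ 2))
      by (simpl; field).
    apply is_derive_scal, is_derive_cos_sin_pow.
  - apply (is_derive_ext_R
             (fun x => sum_n (fun n => cos x * sin x ^ (2 * n + 1) / ((2 * INR n + 2) * cbinom (S n))) N
                       + / ((2 * INR (S N) + 2) * cbinom (S (S N))) * (cos x * sin x ^ S (2 * N + 2)))).
    { intros t. rewrite sum_Sn_R. replace (2 * S N + 1)%nat with (S (2 * N + 2)) by lia. field.
      pose proof (cbinom_pos (S (S N))). pose proof (pos_INR (S N)). nra. }
    pose proof (cbinom_pos (S N)) as Hc. pose proof (pos_INR N).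
    replace (1 - sin x ^ (2 * S N + 2) / cbinom (S (S N)))
      with (1 - sin x ^ (2 * N + 2) / cbinom (S N)
            + / ((2 * INR (S N) + 2) * cbinom (S (S N)))
              * (INR (S (2 * N + 2)) * sin x ^ (2 * N + 2)
                 - INR (S (S (2 * N + 2))) * sin x ^ S (S (2 * N + 2)))).
    + apply (is_derive_plus (V := R_NormedModule)); [exact IH |]. apply is_derive_scal, is_derive_cos_sin_pow.
    + change (cbinom (S (S N))) with (cbinom (S N) * (2 * INR (S N) + 1) / (2 * INR (S N) + 2)).
      replace (2 * S N + 2)%nat with (S (S (2 * N + 2))) by lia.
      rewrite !S_INR, plus_INR, mult_INR. simpl INR. field. lra.
Qed.

Lemma wallis_primitive_0 (N : nat) : wallis_primitive N 0 = 0.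
Proof.
  unfold wallis_primitive. rewrite (sum_n_ext_loc_R _ (fun _ => 0)).
  - rewrite sum_n_const. ring.
  - intros n _. rewrite sin_0, pow_i by lia. unfold Rdiv. ring.
Qed.

Lemma wallis_primitive_nonneg (N : nat) (x : R) : 0 <= x <= PI / 2 -> 0 <= wallis_primitive N x.
Proof.
  intros Hx. rewrite <- (wallis_primitive_0 N).
  apply (le_of_derive_nonneg _ (fun t => sin t ^ (2 * N + 2) / cbinom (S N)) 0 x);
    [lra | intros; apply is_derive_wallis_primitive |].
  intros t Ht. apply Rdiv_le_0_compat; [apply sin_pow_bounds; lra | apply cbinom_pos].
Qed.

Lemma is_RInt_wallis_primitive (N : nat) :
  is_RInt (wallis_primitive N) 0 (PI / 2) (weighted_sin_pow (2 * N + 2) / cbinom (S N)).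
Proof.
  apply (is_RInt_by_parts_weight _ (fun x => sin x ^ (2 * N + 2) / cbinom (S N)));
    [apply PI2_ge_0 | apply wallis_primitive_0 | intros; apply is_derive_wallis_primitive | |].
  - intros x _. continuous_by_derive.
  - replace (weighted_sin_pow (2 * N + 2) / cbinom (S N))
      with (/ cbinom (S N) * weighted_sin_pow (2 * N + 2)) by (unfold Rdiv; ring).
    apply (is_RInt_ext_R (fun x => / cbinom (S N) * ((PI / 2 - x) * sin x ^ (2 * N + 2))));
      [intros x; unfold Rdiv; ring |].
    apply (is_RInt_scal (V := R_NormedModule)), is_RInt_weighted_sin_pow.
Qed.

Lemma wallis_primitive_integral_le (N : nat) :
  weighted_sin_pow (2 * N + 2) / cbinom (S N) <= / ((2 * INR N + 2) * cbinom (S N)).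
Proof.
  pose proof (weighted_sin_pow_even_le N). pose proof (cbinom_pos (S N)). pose proof (pos_INR N).
  rewrite Rinv_mult. unfold Rdiv. apply Rmult_le_compat_r; [apply Rlt_le, Rinv_0_lt_compat; lra |].
  apply (Rmult_le_reg_l (2 * INR N + 2)); [lra |]. rewrite Rinv_r by lra. exact H.
Qed.

Lemma is_RInt_wallis_primitive_sum (N : nat) :
  is_RInt (wallis_primitive N) 0 (PI / 2)
    (PI ^ 2 / 8 - sum_n (fun n => / ((2 * INR n + 2) ^ 2 * cbinom (S n))) N).
Proof.
  apply (is_RInt_minus (V := R_NormedModule)); [apply is_RInt_id_0_PI2 |].
  apply is_RInt_sum_n. intros n. pose proof (cbinom_pos (S n)). pose proof (pos_INR n).
  replace (/ ((2 * INR n + 2) ^ 2 * cbinom (S n)))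
    with (/ ((2 * INR n + 2) * cbinom (S n)) * / INR (S (2 * n + 1)))
    by (rewrite S_INR, plus_INR, mult_INR; simpl INR; field; split; lra).
  apply (is_RInt_ext_R (fun x => / ((2 * INR n + 2) * cbinom (S n)) * (cos x * sin x ^ (2 * n + 1))));
    [intros x; unfold Rdiv; ring |].
  apply (is_RInt_scal (V := R_NormedModule)), is_RInt_cos_sin_pow.
Qed.

Lemma is_series_inv_sqr_cbinom :
  is_series (fun n => / ((INR n + 1) ^ 2 * cbinom (S n))) (PI ^ 2 / 2).
Proof.
  apply (is_series_of_remainder _ _ (fun N => 4 * / ((2 * INR N + 2) * cbinom (S N)))).
  2: { replace (Finite 0) with (Rbar_mult 4 0) by (simpl; f_equal; ring).
       apply is_lim_seq_scal_l, is_lim_seq_inv_cbinom. }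
  intros N. pose proof (cbinom_pos (S N)). pose proof (pos_INR N).
  assert (Hsum : sum_n (fun n => / ((INR n + 1) ^ 2 * cbinom (S n))) N
                 = 4 * sum_n (fun n => / ((2 * INR n + 2) ^ 2 * cbinom (S n))) N).
  { rewrite sum_n_mult_l_R. apply sum_n_ext_loc_R. intros n _.
    pose proof (cbinom_pos (S n)). pose proof (pos_INR n). field. lra. }
  assert (Hval := is_RInt_unique _ _ _ _ (is_RInt_wallis_primitive_sum N)).
  rewrite (is_RInt_unique _ _ _ _ (is_RInt_wallis_primitive N)) in Hval.
  pose proof (wallis_primitive_integral_le N).
  assert (0 <= weighted_sin_pow (2 * N + 2) / cbinom (S N))
    by (apply Rdiv_le_0_compat; [apply weighted_sin_pow_nonneg | lra]).
  rewrite Hsum. lra.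
Qed.

(* Partial sums of [x = arcsin (sin x) = sum_n cbinom n * sin x ^ (2 n + 1) / (2 n + 1)]. *)
Definition arcsin_partial (N : nat) (x : R) : R :=
  sum_n (fun n => cbinom n * sin x ^ (2 * n + 1) / (2 * INR n + 1)) N.

Lemma is_derive_arcsin_partial (N : nat) (x : R) :
  is_derive (arcsin_partial N) x (cos x * sec_partial N x).
Proof.
  unfold sec_partial. rewrite sum_n_mult_l_R.
  apply (is_derive_sum_n (fun n x => cbinom n * sin x ^ (2 * n + 1) / (2 * INR n + 1))).
  intros n _. pose proof (pos_INR n).
  apply (is_derive_ext_R (fun x => cbinom n / (2 * INR n + 1) * sin x ^ S (2 * n))).
  { intros t. replace (2 * n + 1)%nat with (S (2 * n)) by lia. unfold Rdiv. ring. }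
  replace (cos x * (cbinom n * sin x ^ (2 * n)))
    with (cbinom n / (2 * INR n + 1) * (INR (S (2 * n)) * cos x * sin x ^ (2 * n)))
    by (rewrite S_INR, mult_INR; simpl INR; field; lra).
  apply is_derive_scal, is_derive_sin_pow.
Qed.

Lemma is_RInt_arcsin_remainder (N : nat) :
  is_RInt (fun x => x - arcsin_partial N x) 0 (PI / 2)
    (PI ^ 2 / 8 - sum_n (fun n => / (2 * INR n + 1) ^ 2) N).
Proof.
  apply (is_RInt_minus (V := R_NormedModule)); [apply is_RInt_id_0_PI2 |].
  apply is_RInt_sum_n. intros n.
  pose proof (pos_INR n). pose proof (cbinom_S n) as E. pose proof (cbinom_pos n).
  replace (/ (2 * INR n + 1) ^ 2) with (cbinom n / (2 * INR n + 1) * / ((2 * INR n + 2) * cbinom (S n)))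
    by (rewrite E; field; lra).
  apply (is_RInt_ext_R (fun x => cbinom n / (2 * INR n + 1) * sin x ^ (2 * n + 1)));
    [intros x; unfold Rdiv; ring |].
  apply (is_RInt_scal (V := R_NormedModule)), is_RInt_sin_pow_odd.
Qed.

Lemma is_series_inv_sqr_odd : is_series (fun n => / (2 * INR n + 1) ^ 2) (PI ^ 2 / 8).
Proof.
  apply (is_series_of_remainder _ _ (fun N => PI / 2 * cbinom N)).
  2: { replace (Finite 0) with (Rbar_mult (PI / 2) 0) by (simpl; f_equal; ring).
       apply is_lim_seq_scal_l, is_lim_seq_cbinom. }
  intros N.
  assert (Hw : is_RInt (fun x => (PI / 2 - x) * sec_remainder N x) 0 (PI / 2)
                 (RInt (fun x => (PI / 2 - x) * sec_remainder N x) 0 (PI / 2))).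
  { apply (RInt_correct (V := R_CompleteNormedModule)), (ex_RInt_continuous (V := R_CompleteNormedModule)).
    intros x _. apply (continuous_mult (K := R_AbsRing) (fun x => PI / 2 - x));
      [| apply continuous_sec_remainder].
    continuous_by_derive. }
  assert (Hint : is_RInt (fun x => x - arcsin_partial N x) 0 (PI / 2)
                   (RInt (fun x => (PI / 2 - x) * sec_remainder N x) 0 (PI / 2))).
  { apply (is_RInt_by_parts_weight _ (sec_remainder N));
      [apply PI2_ge_0 | | | intros; apply continuous_sec_remainder | exact Hw].
    - unfold arcsin_partial. rewrite (sum_n_ext_loc_R _ (fun _ => 0)), sum_n_const; [ring |].
      intros n _. rewrite sin_0, pow_i by lia. unfold Rdiv. ring.
    - intros x _. unfold sec_remainder.
      apply (is_derive_minus (V := R_NormedModule));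
        [apply (is_derive_id (K := R_AbsRing)) | apply is_derive_arcsin_partial]. }
  rewrite <- (is_RInt_unique _ _ _ _ (is_RInt_arcsin_remainder N)), (is_RInt_unique _ _ _ _ Hint).
  split.
  - apply (is_RInt_ge_0 _ 0 (PI / 2) _ PI2_ge_0 Hw). intros x Hx.
    apply Rmult_le_pos; [lra | apply sec_remainder_nonneg; lra].
  - apply (Rle_trans _ (PI / 2 * ((2 * INR N + 2) * cbinom (S N) * weighted_sin_pow (2 * N + 1)))).
    + apply (is_RInt_le _ (fun x => PI / 2 * sec_remainder N x) 0 (PI / 2) _ _ PI2_ge_0 Hw).
      * apply (is_RInt_scal (V := R_NormedModule)), is_RInt_sec_remainder.
      * intros x Hx. pose proof (sec_remainder_nonneg N x). nra.
    + apply Rmult_le_compat_l; [apply PI2_ge_0 | apply sec_remainder_integral_le].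
Qed.

Lemma sum_n_inv_sqr_even_odd (N : nat) :
  sum_n (fun k => / (INR k + 1) ^ 2) (2 * N + 1)
  = sum_n (fun n => / (2 * INR n + 1) ^ 2) N + sum_n (fun k => / (INR k + 1) ^ 2) N / 4 :> R.
Proof.
  induction N as [|N IH].
  - simpl. rewrite sum_Sn_R, !sum_O. simpl. field.
  - replace (2 * S N + 1)%nat with (S (S (2 * N + 1))) by lia.
    rewrite !sum_Sn_R, IH. rewrite !S_INR, plus_INR, mult_INR. simpl INR. pose proof (pos_INR N).
    field. lra.
Qed.

Lemma is_series_inv_sqr : is_series (fun k => / (INR k + 1) ^ 2) (PI ^ 2 / 6).
Proof.
  set (a := fun k => / (INR k + 1) ^ 2).
  assert (Ha : forall k, 0 <= a k)
    by (intros k; unfold a; pose proof (pos_INR k); apply Rlt_le, Rinv_0_lt_compat; nra).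
  assert (Hodd : forall N, sum_n (fun n => / (2 * INR n + 1) ^ 2) N <= PI ^ 2 / 8).
  { intros N. apply sum_n_le_series; [| apply is_series_inv_sqr_odd].
    intros n. pose proof (pos_INR n). apply Rlt_le, Rinv_0_lt_compat. nra. }
  assert (Hsplit : forall N, sum_n a (2 * N + 1) <= PI ^ 2 / 8 + sum_n a N / 4).
  { intros N. unfold a. rewrite sum_n_inv_sqr_even_odd. specialize (Hodd N). lra. }
  destruct (ex_finite_lim_seq_incr (sum_n a) (PI ^ 2 / 6)) as [L HL].
  { intros N. rewrite sum_Sn_R. specialize (Ha (S N)). lra. }
  { intros N. pose proof (sum_n_le_mono_nonneg a N (2 * N + 1) Ha ltac:(lia)). specialize (Hsplit N). lra. }
  assert (Hsub : is_lim_seq (fun N => sum_n a (2 * N + 1)) L).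
  { apply (is_lim_seq_subseq (sum_n a) L (fun N => 2 * N + 1)%nat); [| exact HL].
    apply eventually_subseq. intros; lia. }
  assert (Hsplit_lim : is_lim_seq (fun N => sum_n a (2 * N + 1)) (PI ^ 2 / 8 + L / 4)).
  { apply (is_lim_seq_ext (fun N => sum_n (fun n => / (2 * INR n + 1) ^ 2) N + sum_n a N * / 4)).
    { intros N. unfold a. now rewrite sum_n_inv_sqr_even_odd. }
    apply is_lim_seq_plus'; [apply is_series_inv_sqr_odd | apply (is_lim_seq_scal_r _ (/ 4) L HL)]. }
  apply is_lim_seq_unique in Hsub, Hsplit_lim. rewrite Hsub in Hsplit_lim. injection Hsplit_lim as E.
  replace (PI ^ 2 / 6) with L by lra. exact HL.
Qed.

(** * A series with value log 2 *)

(* On [0, PI/2), [tan (x / 2) = sin x / (1 + cos x) = cos x * sum_n cbinom (n + 1) * sin x ^ (2 n + 1)]. *)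
Definition tan_half_remainder (N : nat) (x : R) : R :=
  sin x / (1 + cos x) - cos x * sum_n (fun n => cbinom (S n) * sin x ^ (2 * n + 1)) N.

Lemma sin_mul_tan_half_remainder (N : nat) (x : R) :
  0 <= x <= PI / 2 -> sin x * tan_half_remainder N x = sec_remainder (S N) x.
Proof.
  intros Hx. destruct (sin_cos_bounds x Hx) as [_ Hc].
  assert (Hpartial : forall M,
            sin x * sum_n (fun n => cbinom (S n) * sin x ^ (2 * n + 1)) M = sec_partial (S M) x - 1).
  { intros M. unfold sec_partial. induction M as [|M IH].
    - rewrite sum_Sn_R, !sum_O. simpl. ring.
    - rewrite sum_Sn_R, Rmult_plus_distr_l, IH, (sum_Sn_R _ (S M)).
      replace (2 * S (S M))%nat with (S (2 * S M + 1)) by lia. simpl pow. ring. }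
  unfold tan_half_remainder, sec_remainder.
  replace (sin x * (sin x / (1 + cos x) - cos x * sum_n (fun n => cbinom (S n) * sin x ^ (2 * n + 1)) N))
    with ((sin x * sin x) / (1 + cos x)
          - cos x * (sin x * sum_n (fun n => cbinom (S n) * sin x ^ (2 * n + 1)) N))
    by (field; lra).
  rewrite Hpartial.
  replace (sin x * sin x) with ((1 - cos x) * (1 + cos x))
    by (pose proof (sin2_cos2 x); unfold Rsqr in *; nra).
  field. lra.
Qed.

Lemma is_RInt_sin_div_one_plus_cos : is_RInt (fun x => sin x / (1 + cos x)) 0 (PI / 2) (ln 2).
Proof.
  replace (ln 2) with (- ln (1 + cos (PI / 2)) - - ln (1 + cos 0))
    by (rewrite cos_PI2, cos_0, Rplus_0_r, ln_1; replace (1 + 1) with 2 by ring; ring).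
  apply (is_RInt_derive_le (fun x => - ln (1 + cos x))); [apply PI2_ge_0 | |].
  - intros x Hx. destruct (sin_cos_bounds x Hx) as [_ Hc]. auto_derive; [lra | field; lra].
  - intros x Hx. destruct (sin_cos_bounds x Hx) as [_ Hc]. continuous_by_derive. lra.
Qed.

Lemma is_RInt_tan_half_remainder (N : nat) :
  is_RInt (tan_half_remainder N) 0 (PI / 2) (ln 2 - sum_n (fun n => cbinom (S n) / (2 * INR n + 2)) N).
Proof.
  apply (is_RInt_minus (V := R_NormedModule)); [apply is_RInt_sin_div_one_plus_cos |].
  apply (is_RInt_ext_R (fun x => sum_n (fun n => cbinom (S n) * (cos x * sin x ^ (2 * n + 1))) N)).
  { intros x. rewrite sum_n_mult_l_R. apply sum_n_ext_loc_R. intros n _. ring. }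
  apply is_RInt_sum_n. intros n.
  replace (cbinom (S n) / (2 * INR n + 2)) with (cbinom (S n) * / INR (S (2 * n + 1)))
    by (rewrite S_INR, plus_INR, mult_INR; simpl INR; unfold Rdiv; f_equal; f_equal; ring).
  apply (is_RInt_scal (V := R_NormedModule)), is_RInt_cos_sin_pow.
Qed.

Lemma sec_remainder_le_wallis_primitive (N : nat) (x : R) : 0 <= x <= PI / 2 ->
  sec_remainder (S N) x <= (2 * INR N + 4) * cbinom (S (S N)) * cbinom (S N) * sin x * wallis_primitive N x.
Proof.
  intros Hx. set (K := (2 * INR N + 4) * cbinom (S (S N)) * cbinom (S N)).
  assert (HK : 0 <= K).
  { pose proof (cbinom_pos (S N)). pose proof (cbinom_pos (S (S N))). pose proof (pos_INR N).
    unfold K. apply Rmult_le_pos; [apply Rmult_le_pos |]; lra. }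
  enough (H : K * sin 0 * wallis_primitive N 0 - sec_remainder (S N) 0
              <= K * sin x * wallis_primitive N x - sec_remainder (S N) x)
    by (rewrite sin_0, sec_remainder_0 in H; lra).
  apply (le_of_derive_nonneg (fun t => K * sin t * wallis_primitive N t - sec_remainder (S N) t)
           (fun t => K * cos t * wallis_primitive N t)); [lra | |].
  - intros t _.
    replace (K * cos t * wallis_primitive N t)
      with ((K * cos t * wallis_primitive N t + K * sin t * (sin t ^ (2 * N + 2) / cbinom (S N)))
            - (2 * INR (S N) + 2) * cbinom (S (S N)) * sin t ^ (2 * S N + 1)).
    + apply (is_derive_minus (V := R_NormedModule)); [| apply is_derive_sec_remainder].
      apply (is_derive_mult_R (fun t => K * sin t));
        [apply is_derive_scal, is_derive_sin | apply is_derive_wallis_primitive].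
    + unfold K. pose proof (cbinom_pos (S N)). replace (2 * S N + 1)%nat with (S (2 * N + 2)) by lia.
      rewrite S_INR. simpl pow. field. lra.
  - intros t Ht. assert (Ht' : 0 <= t <= PI / 2) by lra.
    destruct (sin_cos_bounds t Ht') as [_ Hc]. pose proof (wallis_primitive_nonneg N t Ht').
    apply Rmult_le_pos; [apply Rmult_le_pos |]; lra.
Qed.

Lemma tan_half_remainder_bounds (N : nat) (x : R) : 0 < x <= PI / 2 ->
  0 <= tan_half_remainder N x <= (2 * INR N + 4) * cbinom (S (S N)) * cbinom (S N) * wallis_primitive N x.
Proof.
  intros Hx. assert (Hs : 0 < sin x) by (apply sin_gt_0; pose proof PI_RGT_0; lra).
  assert (Hx' : 0 <= x <= PI / 2) by lra.
  pose proof (sin_mul_tan_half_remainder N x Hx') as E.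
  pose proof (sec_remainder_nonneg (S N) x Hx'). pose proof (sec_remainder_le_wallis_primitive N x Hx').
  split; apply (Rmult_le_reg_l (sin x)); lra.
Qed.

Lemma is_series_cbinom_div : is_series (fun n => cbinom (S n) / (INR n + 1)) (2 * ln 2).
Proof.
  apply (is_series_of_remainder _ _ (fun N => 4 * cbinom N)).
  2: { replace (Finite 0) with (Rbar_mult 4 0) by (simpl; f_equal; ring).
       apply is_lim_seq_scal_l, is_lim_seq_cbinom. }
  intros N. set (K := (2 * INR N + 4) * cbinom (S (S N)) * cbinom (S N)).
  pose proof (pos_INR N). pose proof (cbinom_pos N). pose proof (cbinom_pos (S N)).
  assert (Hsum : sum_n (fun n => cbinom (S n) / (INR n + 1)) N
                 = 2 * sum_n (fun n => cbinom (S n) / (2 * INR n + 2)) N).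
  { rewrite sum_n_mult_l_R. apply sum_n_ext_loc_R. intros n _. pose proof (pos_INR n). field. lra. }
  assert (Hlow : 0 <= ln 2 - sum_n (fun n => cbinom (S n) / (2 * INR n + 2)) N).
  { apply (is_RInt_ge_0 _ 0 (PI / 2) _ PI2_ge_0 (is_RInt_tan_half_remainder N)).
    intros x Hx. apply tan_half_remainder_bounds. lra. }
  assert (Hup : ln 2 - sum_n (fun n => cbinom (S n) / (2 * INR n + 2)) N
                <= K * (weighted_sin_pow (2 * N + 2) / cbinom (S N))).
  { apply (is_RInt_le _ (fun x => K * wallis_primitive N x) 0 (PI / 2) _ _ PI2_ge_0
             (is_RInt_tan_half_remainder N)).
    - apply (is_RInt_scal (V := R_NormedModule)), is_RInt_wallis_primitive.
    - intros x Hx. apply tan_half_remainder_bounds. lra. }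
  assert (HK : K * / ((2 * INR N + 2) * cbinom (S N)) = (INR N + 2) / (INR N + 1) * cbinom (S (S N)))
    by (unfold K; field; lra).
  assert (HKM : K * (weighted_sin_pow (2 * N + 2) / cbinom (S N)) <= 2 * cbinom N).
  { pose proof (cbinom_pos (S (S N))). pose proof (cbinom_S_le N). pose proof (cbinom_S_le (S N)).
    apply (Rle_trans _ (K * / ((2 * INR N + 2) * cbinom (S N)))).
    - apply Rmult_le_compat_l; [| apply wallis_primitive_integral_le].
      unfold K. apply Rmult_le_pos; [apply Rmult_le_pos |]; lra.
    - rewrite HK. apply (Rle_trans _ (2 * cbinom (S (S N)))); [| lra].
      apply Rmult_le_compat_r; [lra |]. apply Rle_div_l; lra. }
  rewrite Hsum. lra.
Qed.

(** * Harmonic numbers *)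

Lemma harmonic_0 : harmonic 0 = 0.
Proof. unfold harmonic. now rewrite sum_n_m_zero by lia. Qed.

Lemma harmonic_S (n : nat) : harmonic (S n) = harmonic n + / INR (S n).
Proof. unfold harmonic. now rewrite sum_n_Sm by lia. Qed.

Lemma harmonic_S_sum_n (n : nat) : harmonic (S n) = sum_n (fun k => / (INR k + 1)) n.
Proof.
  induction n as [|n IH].
  - rewrite harmonic_S, harmonic_0, sum_O. simpl. field.
  - rewrite harmonic_S, IH, sum_Sn_R, S_INR. reflexivity.
Qed.

Lemma is_lim_seq_harmonic_shift_sub (p : nat) : is_lim_seq (fun k => harmonic (k + p) - harmonic k) 0.
Proof.
  induction p as [|p IH].
  - apply (is_lim_seq_ext (fun _ => 0)); [intros k; rewrite Nat.add_0_r; ring | apply is_lim_seq_const].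
  - apply (is_lim_seq_ext (fun k => (harmonic (k + p) - harmonic k) + / (1 * INR k + (INR p + 1)))).
    { intros k. rewrite Nat.add_succ_r, harmonic_S, S_INR, plus_INR.
      replace (1 * INR k + (INR p + 1)) with (INR k + INR p + 1) by ring. ring. }
    replace (Finite 0) with (Rbar_plus 0 0) by (simpl; f_equal; ring).
    apply is_lim_seq_plus'; [exact IH |]. apply is_lim_seq_inv_affine; pose proof (pos_INR p); lra.
Qed.

Lemma is_series_harmonic_div (p : nat) : (0 < p)%nat ->
  is_series (fun k => / ((INR k + 1) * (INR k + 1 + INR p))) (harmonic p / INR p).
Proof.
  intros Hp. assert (HpR : 0 < INR p) by (apply lt_0_INR; lia).
  pose proof (is_series_telescope _ _ (is_lim_seq_harmonic_shift_sub p)) as H.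
  cbv beta in H. rewrite harmonic_0, Nat.add_0_l in H.
  apply (is_series_ext_R
           (fun k => / INR p * ((harmonic (k + p) - harmonic k) - (harmonic (S k + p) - harmonic (S k))))).
  - intros k. rewrite Nat.add_succ_l, !harmonic_S, !S_INR, plus_INR. pose proof (pos_INR k). field. lra.
  - replace (harmonic p / INR p) with (/ INR p * (harmonic p - 0 - 0)) by (unfold Rdiv; ring).
    now apply (is_series_scal (K := R_AbsRing) (V := R_NormedModule)).
Qed.

Lemma is_series_cbinom_harmonic_div :
  is_series (fun n => cbinom (S n) * harmonic (S n) / INR (S n)) (PI ^ 2 / 3).
Proof.
  apply (is_series_swap_nonneg (fun n k => cbinom (S n) / ((INR k + 1) * (INR k + 1 + INR (S n))))
           _ (fun k => / ((INR k + 1) ^ 2 * cbinom (S k)) - / (INR k + 1) ^ 2)).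
  - intros n k. pose proof (cbinom_pos (S n)). pose proof (pos_INR k). pose proof (pos_INR (S n)).
    apply Rdiv_le_0_compat; [lra | nra].
  - intros n. apply (is_series_ext_R (fun k => cbinom (S n) * / ((INR k + 1) * (INR k + 1 + INR (S n)))));
      [intros k; unfold Rdiv; ring |].
    replace (cbinom (S n) * harmonic (S n) / INR (S n)) with (cbinom (S n) * (harmonic (S n) / INR (S n)))
      by (unfold Rdiv; ring).
    apply (is_series_scal (K := R_AbsRing) (V := R_NormedModule)), is_series_harmonic_div. lia.
  - intros k. pose proof (pos_INR k). pose proof (cbinom_pos (S k)).
    pose proof (is_series_shift_R _ _ (is_series_cbinom_div_add k)) as Hk.
    apply (is_series_ext_R (fun n => / (INR k + 1) * (cbinom (S n) / (INR (S n) + INR k + 1)))).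
    { intros n. rewrite S_INR. field. pose proof (pos_INR n). lra. }
    replace (/ ((INR k + 1) ^ 2 * cbinom (S k)) - / (INR k + 1) ^ 2)
      with (/ (INR k + 1) * (/ ((INR k + 1) * cbinom (S k)) - cbinom 0 / (INR 0 + INR k + 1)))
      by (change (cbinom 0) with 1; change (INR 0) with 0; field; split; lra).
    now apply (is_series_scal (K := R_AbsRing) (V := R_NormedModule)).
  - replace (PI ^ 2 / 3) with (PI ^ 2 / 2 - PI ^ 2 / 6) by field.
    apply (is_series_minus (K := R_AbsRing) (V := R_NormedModule));
      [apply is_series_inv_sqr_cbinom | apply is_series_inv_sqr].
Qed.

Lemma is_series_cbinom_harmonic_div_succ :
  is_series (fun n => cbinom (S n) * harmonic (S n) / (INR n + 2)) (4 * ln 2).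
Proof.
  set (a := fun n k => if (k <=? n)%nat then cbinom (S n) / ((INR k + 1) * (INR n + 2)) else 0).
  apply (is_series_swap_nonneg a _ (fun k => 2 * (cbinom (S k) / (INR k + 1)))).
  - intros n k. unfold a. destruct (k <=? n)%nat; [| lra].
    pose proof (cbinom_pos (S n)). pose proof (pos_INR k). pose proof (pos_INR n).
    apply Rdiv_le_0_compat; [lra | nra].
  - intros n. replace (cbinom (S n) * harmonic (S n) / (INR n + 2)) with (sum_n (a n) n).
    + apply is_series_finite. intros k Hk. unfold a. destruct (Nat.leb_spec k n); [lia | reflexivity].
    + rewrite harmonic_S_sum_n.
      replace (cbinom (S n) * sum_n (fun k => / (INR k + 1)) n / (INR n + 2))
        with (cbinom (S n) / (INR n + 2) * sum_n (fun k => / (INR k + 1)) n) by (unfold Rdiv; ring).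
      rewrite sum_n_mult_l_R. apply sum_n_ext_loc_R. intros k Hk.
      unfold a. destruct (Nat.leb_spec k n); [| lia].
      pose proof (pos_INR k). pose proof (pos_INR n). field. lra.
  - intros k. pose proof (pos_INR k).
    (* [a n k] telescopes since [cbinom (S n) / (n + 2) = 2 (cbinom (S n) - cbinom (S (S n)))]. *)
    set (u := fun n => 2 * cbinom (S (Nat.max n k)) / (INR k + 1)).
    apply (is_series_ext_R (fun n => u n - u (S n))).
    + intros n. unfold u, a. destruct (Nat.leb_spec k n).
      * rewrite !Nat.max_l by lia.
        change (cbinom (S (S n))) with (cbinom (S n) * (2 * INR (S n) + 1) / (2 * INR (S n) + 2)).
        rewrite S_INR. pose proof (pos_INR n). field. lra.
      * rewrite !Nat.max_r by lia. ring.
    + replace (2 * (cbinom (S k) / (INR k + 1))) with (u O - 0)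
        by (unfold u; rewrite Nat.max_0_l; field; lra).
      apply is_series_telescope.
      apply (is_lim_seq_ext_loc (fun n => 2 / (INR k + 1) * cbinom (S n))).
      * exists k. intros n Hn. unfold u. rewrite Nat.max_l by lia. unfold Rdiv. ring.
      * replace (Finite 0) with (Rbar_mult (2 / (INR k + 1)) 0) by (simpl; f_equal; ring).
        apply is_lim_seq_scal_l. apply (is_lim_seq_incr_1 cbinom 0), is_lim_seq_cbinom.
  - replace (4 * ln 2) with (2 * (2 * ln 2)) by ring.
    apply (is_series_scal (K := R_AbsRing) (V := R_NormedModule)), is_series_cbinom_div.
Qed.

Lemma summand_S (m : nat) :
  summand (S m) = cbinom (S m) * harmonic (S m) / INR (S m) - cbinom (S m) * harmonic (S m) / (INR m + 2).
Proof.
  unfold summand. rewrite central_binom_cbinom, S_INR. pose proof (pos_INR m).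
  assert (0 < 2 ^ (2 * S m)) by (apply pow_lt; lra). field. lra.
Qed.

Theorem mainTheorem2 :
  is_series (fun m : nat => summand (S m)) (PI ^ 2 / 3 - 4 * ln 2).
Proof.
  apply (is_series_ext_R (fun m => cbinom (S m) * harmonic (S m) / INR (S m)
                                   - cbinom (S m) * harmonic (S m) / (INR m + 2))).
  - intros m. symmetry. apply summand_S.
  - apply (is_series_minus (K := R_AbsRing) (V := R_NormedModule));
      [apply is_series_cbinom_harmonic_div | apply is_series_cbinom_harmonic_div_succ].
Qed.
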